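(* Let $\overline{\mathcal R}(D_x,D_z)$ be defined exactly as $\mathcal R(D_x,D_z)$ except that the joint distribution is allowed to be of the form $p(x,y,z,u,v,w)=p(x,y)p(z|x)p(u|y)p(v|u,z)p(w|u,v,x,y)$. Then $\overline{\mathcal R}(D_x,D_z)=\mathcal R(D_x,D_z)$.
   Context: Let $\mathcal X,\mathcal Y,\mathcal Z,\hat{\mathcal X},\hat{\mathcal Z}$ be finite alphabets, $(X,Y,Z)\sim p(x,y)p(z|x)$, and $d_x:\mathcal X\times\hat{\mathcal X}\to[0,\infty)$, $d_z:\mathcal Z\times\hat{\mathcal Z}\to[0,\infty)$. $\mathcal R(D_x,D_z)$ is the set of all rate triples $(R_1,R_2,R_3)$ with $R_1\ge I(Y;U|Z)$, $R_2\ge I(Z;V|U,X)$, $R_3\ge I(X;W|U,V,Z)$ for some finite-alphabet random variables $U,V,W$ with joint distribution $p(x,y,z,u,v,w)=p(x,y)p(z|x)p(u|y)p(v|u,z)p(w|u,v,x)$ and deterministic functions $\hat X(U,W,Z)$, $\hat Z(U,V,X)$ with $\mathbb E\, d_x(X,\hat X(U,W,Z))\le D_x$ and $\mathbb E\, d_z(Z,\hat Z(U,V,X))\le D_z$. *)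

From mathcomp Require Import all_boot all_order all_algebra.
From mathcomp Require Import reals exp.
Set Implicit Arguments. Unset Strict Implicit. Unset Printing Implicit Defensive.
Import Order.TTheory GRing.Theory Num.Theory.
Local Open Scope ring_scope.

Section Defs.
Variable R : realType.

Definition is_pmf (T : finType) (p : T -> R) :=
  (forall t, 0 <= p t) /\ \sum_t p t = 1.

Definition is_kernel (A B : finType) (k : A -> B -> R) :=
  forall a, is_pmf (k a).

Definition prob (Om : finType) (P : Om -> R) (E : pred Om) : R :=
  \sum_(o | E o) P o.

(* conditional mutual information I(A;B|C) (natural log) of random variables
   fa, fb, fc defined on the finite probability space (Om, P):
   sum_{a,b,c} p(a,b,c) log (p(a,b,c) p(c) / (p(a,c) p(b,c))),
   terms with p(a,b,c) = 0 contributing 0. *)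
Definition cmi (Om A B C : finType) (P : Om -> R)
    (fa : Om -> A) (fb : Om -> B) (fc : Om -> C) : R :=
  \sum_(a : A) \sum_(b : B) \sum_(c : C)
    let pabc := prob P [pred o | [&& fa o == a, fb o == b & fc o == c]] in
    let pac := prob P [pred o | (fa o == a) && (fc o == c)] in
    let pbc := prob P [pred o | (fb o == b) && (fc o == c)] in
    let pc := prob P [pred o | fc o == c] in
    pabc * ln (pabc * pc / (pac * pbc)).

Definition expect (Om : finType) (P : Om -> R) (g : Om -> R) : R :=
  \sum_o P o * g o.

Section Region.
Variables (X Y Z Xh Zh : finType).
Variables (pxy : X -> Y -> R) (pzx : X -> Z -> R).
Variables (dx : X -> Xh -> R) (dz : Z -> Zh -> R).

Definition sspace (U V W : finType) := (X * Y * Z * U * V * W)%type.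
Definition sX {U V W : finType} (o : sspace U V W) : X := o.1.1.1.1.1.
Definition sY {U V W : finType} (o : sspace U V W) : Y := o.1.1.1.1.2.
Definition sZ {U V W : finType} (o : sspace U V W) : Z := o.1.1.1.2.
Definition sU {U V W : finType} (o : sspace U V W) : U := o.1.1.2.
Definition sV {U V W : finType} (o : sspace U V W) : V := o.1.2.
Definition sW {U V W : finType} (o : sspace U V W) : W := o.2.

Definition joint (U V W : finType) (pu : Y -> U -> R) (pv : U -> Z -> V -> R)
    (pw : U -> V -> X -> Y -> W -> R) (o : sspace U V W) : R :=
  pxy (sX o) (sY o) * pzx (sX o) (sZ o) * pu (sY o) (sU o)
  * pv (sU o) (sZ o) (sV o) * pw (sU o) (sV o) (sX o) (sY o) (sW o).

(* conditions common to both regions, given the (general) W-kernel pw *)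
Definition achieves (U V W : finType) (pu : Y -> U -> R) (pv : U -> Z -> V -> R)
    (pw : U -> V -> X -> Y -> W -> R) (xh : U -> W -> Z -> Xh)
    (zh : U -> V -> X -> Zh) (Dx Dz R1 R2 R3 : R) : Prop :=
  let P := joint pu pv pw in
  [/\ R1 >= cmi P sY sU sZ,
      R2 >= cmi P sZ sV (fun o => (sU o, sX o)),
      R3 >= cmi P sX sW (fun o => (sU o, sV o, sZ o)),
      expect P (fun o => dx (sX o) (xh (sU o) (sW o) (sZ o))) <= Dx &
      expect P (fun o => dz (sZ o) (zh (sU o) (sV o) (sX o))) <= Dz].

Definition region (Dx Dz R1 R2 R3 : R) : Prop :=
  exists (U V W : finType) (pu : Y -> U -> R) (pv : U -> Z -> V -> R)
    (pw : U -> V -> X -> W -> R) (xh : U -> W -> Z -> Xh) (zh : U -> V -> X -> Zh),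
    [/\ is_kernel pu, is_kernel (fun uz : U * Z => pv uz.1 uz.2),
        is_kernel (fun uvx : U * V * X => pw uvx.1.1 uvx.1.2 uvx.2) &
        achieves pu pv (fun u v x (_ : Y) => pw u v x) xh zh Dx Dz R1 R2 R3].

Definition region_bar (Dx Dz R1 R2 R3 : R) : Prop :=
  exists (U V W : finType) (pu : Y -> U -> R) (pv : U -> Z -> V -> R)
    (pw : U -> V -> X -> Y -> W -> R) (xh : U -> W -> Z -> Xh) (zh : U -> V -> X -> Zh),
    [/\ is_kernel pu, is_kernel (fun uz : U * Z => pv uz.1 uz.2),
        is_kernel (fun uvxy : U * V * X * Y =>
                     pw uvxy.1.1.1 uvxy.1.1.2 uvxy.1.2 uvxy.2) &
        achieves pu pv pw xh zh Dx Dz R1 R2 R3].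
End Region.
End Defs.

From mathcomp Require Import all_boot all_order all_algebra.
From mathcomp Require Import reals exp.
From mathcomp Require Import ring.
Import Order.TTheory GRing.Theory Num.Theory.
Set Implicit Arguments. Unset Strict Implicit.
Local Open Scope ring_scope.

(* A W-kernel p(w|u,v,x,y) can be replaced by its average
   p(w|u,v,x) = sum_y p(y|x,u) p(w|u,v,x,y) over the posterior p(y|x,u),
   which is proportional to p(x,y) p(u|y); conditioning on v as well would
   not change it, since v depends on y only through (u, x).  This replacement leaves the law
   of (X,Y,Z,U,V) untouched, as does any change of the W-kernel, and it keeps
   the law of (X,Z,U,V,W), because the y-sums of p(x,y) p(u|y) p(w|...)
   agree.  Every rate term and distortion is a functional of one of these two
   marginals, so both regions coincide. *)

Section Mixture.
Variables (R : numFieldType) (I W : finType).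
Variables (c : I -> R) (k : I -> W -> R) (k0 : W -> R).

(* The [c]-weighted average of the rows of [k]; [k0] is a fallback used when
   all weights vanish. *)
Definition mixture (w : W) : R :=
  if \sum_i c i == 0 then k0 w else (\sum_i c i * k i w) / \sum_i c i.

Hypothesis c_ge0 : forall i, 0 <= c i.

Lemma mixture_ge0 w :
  (forall i w, 0 <= k i w) -> (forall w, 0 <= k0 w) -> 0 <= mixture w.
Proof.
move=> k_ge0 k0_ge0; rewrite /mixture; case: ifP => _ //.
by apply: divr_ge0; apply: sumr_ge0 => i _; rewrite ?mulr_ge0.
Qed.

Lemma sum_mixture :
  (forall i, \sum_w k i w = 1) -> \sum_w k0 w = 1 -> \sum_w mixture w = 1.
Proof.
move=> k1 k01; rewrite /mixture; case: eqP => [_ //|c_neq0].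
rewrite -mulr_suml exchange_big /=.
under eq_bigr do rewrite -mulr_sumr k1 mulr1.
exact/divff/eqP.
Qed.

Lemma sum_mulr_mixture w : \sum_i c i * mixture w = \sum_i c i * k i w.
Proof.
rewrite -big_distrl /= /mixture; case: eqP => [c0|c_neq0].
  rewrite c0 mul0r; apply/esym/big1 => i _.
  by rewrite (psumr_eq0P (fun i _ => c_ge0 i) c0) ?mul0r.
by rewrite mulrC divfK //; apply/eqP.
Qed.

End Mixture.

Section Marginals.
Variable R : realType.

Lemma sum_pairE (A B : finType) (F : A * B -> R) :
  \sum_o F o = \sum_a \sum_b F (a, b).
Proof. by rewrite pair_bigA; apply: eq_bigr => -[]. Qed.

Lemma card_gt0_of_sum_eq1 (T : finType) (F : T -> R) :
  \sum_t F t = 1 -> (0 < #|T|)%N.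
Proof.
move=> F1; rewrite lt0n; apply/negP => /eqP/card0_eq T0.
by move: F1; rewrite big_pred0 // => /eqP; rewrite eq_sym oner_eq0.
Qed.

Lemma eq_sum_pmf_mulr (W : finType) (k k' f : W -> R) :
  \sum_w k w = 1 -> \sum_w k' w = 1 -> (forall w w', f w = f w') ->
  \sum_w k w * f w = \sum_w k' w * f w.
Proof.
move=> k1 k'1 f_const; case: (pickP (@predT W)) => [w0 _|W0]; last first.
  by rewrite !big_pred0.
suff sum_f (q : W -> R) : \sum_w q w = 1 -> \sum_w q w * f w = f w0.
  by rewrite !sum_f.
move=> q1; under eq_bigr do rewrite (f_const _ w0).
by rewrite -big_distrl /= q1 mul1r.
Qed.

Lemma prob_expect (Om : finType) (P : Om -> R) (E : pred Om) :
  prob P E = expect P (fun o => (E o)%:R).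
Proof.
rewrite /prob /expect big_mkcond; apply: eq_bigr => o _.
by case: (E o); rewrite ?mulr1 ?mulr0.
Qed.

Lemma cmi_eq (Om A B C : finType) (P P' : Om -> R)
    (fa : Om -> A) (fb : Om -> B) (fc : Om -> C) :
  (forall E : pred (A * B * C),
     prob P [pred o | E (fa o, fb o, fc o)] = prob P' [pred o | E (fa o, fb o, fc o)]) ->
  cmi P fa fb fc = cmi P' fa fb fc.
Proof.
move=> law_eq; rewrite /cmi; apply: eq_bigr => a _; apply: eq_bigr => b _.
apply: eq_bigr => c _.
rewrite (law_eq [pred t | [&& t.1.1 == a, t.1.2 == b & t.2 == c]]).
rewrite (law_eq [pred t | (t.1.1 == a) && (t.2 == c)]).
rewrite (law_eq [pred t | (t.1.2 == b) && (t.2 == c)]).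
by rewrite (law_eq [pred t | t.2 == c]).
Qed.

Variables (X Y Z U V W : finType).
Variables (pxy : X -> Y -> R) (pzx : X -> Z -> R).
Variables (pu : Y -> U -> R) (pv : U -> Z -> V -> R).

Definition w_free (T : Type) (g : sspace X Y Z U V W -> T) :=
  forall a w w', g (a, w) = g (a, w').

Definition y_free (T : Type) (g : sspace X Y Z U V W -> T) :=
  forall x y y' z u v w, g (x, y, z, u, v, w) = g (x, y', z, u, v, w).

Lemma big_sspace (F : sspace X Y Z U V W -> R) :
  \sum_o F o = \sum_x \sum_y \sum_z \sum_u \sum_v \sum_w F (x, y, z, u, v, w).
Proof. by rewrite !sum_pairE. Qed.

Section KernelChange.
Variables (pw pw' : U -> V -> X -> Y -> W -> R).
Hypotheses (pw1 : forall u v x y, \sum_w pw u v x y w = 1)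
           (pw'1 : forall u v x y, \sum_w pw' u v x y w = 1).

Lemma expect_joint_w_free (g : sspace X Y Z U V W -> R) : w_free g ->
  expect (joint pxy pzx pu pv pw) g = expect (joint pxy pzx pu pv pw') g.
Proof.
move=> g_free; rewrite /expect !big_sspace.
apply: eq_bigr => x _; apply: eq_bigr => y _; apply: eq_bigr => z _.
apply: eq_bigr => u _; apply: eq_bigr => v _; rewrite /joint /sX /sY /sZ /sU /sV /=.
under eq_bigr do rewrite -mulrA; under [RHS]eq_bigr do rewrite -mulrA.
rewrite -!mulr_sumr; congr (_ * _).
exact/eq_sum_pmf_mulr/g_free.
Qed.

Lemma prob_joint_w_free (E : pred (sspace X Y Z U V W)) : w_free E ->
  prob (joint pxy pzx pu pv pw) E = prob (joint pxy pzx pu pv pw') E.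
Proof.
move=> E_free; rewrite !prob_expect; apply: expect_joint_w_free => a w w'.
by rewrite (E_free a w w').
Qed.

End KernelChange.

Section KernelAverage.
Hypotheses (pxy_ge0 : forall x y, 0 <= pxy x y) (pu_ge0 : forall y u, 0 <= pu y u).
Variables (pw : U -> V -> X -> Y -> W -> R) (y0 : Y).

Definition kernel_avg (u : U) (v : V) (x : X) : W -> R :=
  mixture (fun y => pxy x y * pu y u) (pw u v x) (pw u v x y0).

Let joint_avg := joint pxy pzx pu pv (fun u v x (_ : Y) => kernel_avg u v x).

Lemma expect_joint_y_free (g : sspace X Y Z U V W -> R) : y_free g ->
  expect (joint pxy pzx pu pv pw) g = expect joint_avg g.
Proof.
move=> g_free; rewrite /expect !big_sspace; apply: eq_bigr => x _.
rewrite exchange_big [RHS]exchange_big; apply: eq_bigr => z _.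
rewrite exchange_big [RHS]exchange_big; apply: eq_bigr => u _.
rewrite exchange_big [RHS]exchange_big; apply: eq_bigr => v _.
rewrite exchange_big [RHS]exchange_big; apply: eq_bigr => w _.
have factor (q : U -> V -> X -> Y -> W -> R) :
    \sum_y joint pxy pzx pu pv q (x, y, z, u, v, w) * g (x, y, z, u, v, w)
    = pzx x z * pv u z v * g (x, y0, z, u, v, w)
      * \sum_y pxy x y * pu y u * q u v x y w.
  rewrite big_distrr; apply: eq_bigr => y _.
  by rewrite /joint /sX /sY /sZ /sU /sV /= (g_free x y y0); ring.
rewrite !factor /=; congr (_ * _).
by rewrite sum_mulr_mixture // => y; apply: mulr_ge0.
Qed.

Lemma prob_joint_y_free (E : pred (sspace X Y Z U V W)) : y_free E ->
  prob (joint pxy pzx pu pv pw) E = prob joint_avg E.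
Proof.
move=> E_free; rewrite !prob_expect; apply: expect_joint_y_free => x y y' z u v w.
by rewrite (E_free x y y').
Qed.

End KernelAverage.

End Marginals.

Theorem lemma5 (R : realType) (X Y Z Xh Zh : finType)
    (pxy : X -> Y -> R) (pzx : X -> Z -> R)
    (dx : X -> Xh -> R) (dz : Z -> Zh -> R)
    (hpxy : is_pmf (fun xy : X * Y => pxy xy.1 xy.2))
    (hpzx : is_kernel pzx)
    (hdx : forall x xh, 0 <= dx x xh) (hdz : forall z zh, 0 <= dz z zh)
    (Dx Dz R1 R2 R3 : R) :
  region_bar pxy pzx dx dz Dx Dz R1 R2 R3 <-> region pxy pzx dx dz Dx Dz R1 R2 R3.
Proof.
split; last first.
  case=> U [V [W [pu [pv [pw [xh [zh [hu hv hw ach]]]]]]]].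
  by exists U, V, W, pu, pv, (fun u v x (_ : Y) => pw u v x), xh, zh; split.
case=> U [V [W [pu [pv [pw [xh [zh [hu hv hw ach]]]]]]]].
have [[_ y0] _] := card_gt0P (card_gt0_of_sum_eq1 hpxy.2).
have pxy_ge0 x y : 0 <= pxy x y by exact: hpxy.1 (x, y).
have pu_ge0 y u : 0 <= pu y u by exact: (hu y).1.
pose pw_avg := kernel_avg pxy pu pw y0.
have pw1 u v x y : \sum_w pw u v x y w = 1 by exact: (hw (u, v, x, y)).2.
have pw_avg1 u v x : \sum_w pw_avg u v x w = 1 by exact: sum_mixture.
exists U, V, W, pu, pv, pw_avg, xh, zh; split => //.
  move=> [[u v] x]; split; last exact: pw_avg1.
  move=> w; apply: mixture_ge0 => [y|y w'|w']; first exact: mulr_ge0.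
    exact: (hw (u, v, x, y)).1.
  exact: (hw (u, v, x, y0)).1.
pose P := joint pxy pzx pu pv pw.
pose P' := joint pxy pzx pu pv (fun u v x (_ : Y) => pw_avg u v x).
have law_w E : w_free E -> prob P E = prob P' E.
  exact: (prob_joint_w_free pxy pzx pu pv pw1 (fun u v x _ => pw_avg1 u v x)).
have law_y E : y_free E -> prob P E = prob P' E.
  exact: (prob_joint_y_free pzx pv pxy_ge0 pu_ge0).
case: ach => RY RZ RX DX DZ; split.
- by rewrite -(cmi_eq (P := P)) // => E; apply: law_w.
- by rewrite -(cmi_eq (P := P)) // => E; apply: law_w.
- by rewrite -(cmi_eq (P := P)) // => E; apply: law_y.
- by rewrite -(expect_joint_y_free pzx pv pxy_ge0 pu_ge0 pw y0).
- by rewrite -(expect_joint_w_free pxy pzx pu pv pw1 (fun u v x _ => pw_avg1 u v x)).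
Qed.
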